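(* Consider a $d$-regular simple graph ($d\ge3$) on $B$ bonds, with arbitrary bond lengths, quantised with unitary vertex scattering matrices that prohibit back-scattering (all diagonal entries of every $\sigma_v$ are zero). Let $T$ be a positive integer, $\kappa>0$, and $f\in\mathbb{C}^{2B}$ with $|f_b|\le\kappa$ for $b=1,\dots,2B$. Then for all $t=1,2,\dots,T$, $$\big|\langle f,\tilde M^{(t)}f\rangle_{\mathbb{C}^{2B}}-\langle f,M^tf\rangle_{\mathbb{C}^{2B}}\big|\le\frac{2\kappa^2}{(d-2)(d-1)}(d-1)^t\,|\mathcal{C}_{B,2T}|.$$
   Context: A graph is simple if it has no loops or multiple edges. Each bond of length $L_b>0$ gives two directed bonds of equal length; $o(b),t(b)$ denote origin and terminus of directed bond $b$. Each vertex $v$ carries a unitary $d\times d$ matrix $\sigma_v$ indexed by the bonds at $v$; the bond scattering matrix $S$ ($2B\times2B$) has $S_{bc}=0$ unless $t(b)=o(c)$, and otherwise equals the entry of $\sigma_{t(b)}$ in the row of the bond underlying $c$ and column of the bond underlying $b$. $U(k)_{bc}=e^{ikL_b}S_{bc}$. $M$ is the $2B\times2B$ matrix $M_{bc}=|S_{bc}|^2$. $\tilde M^{(t)}_{bc}=\lim_{K\to\infty}\frac1K\int_0^K|(U(k)^t)_{bc}|^2\,dk$. $\langle x,y\rangle=\sum_i\bar x_iy_i$. A cycle is a closed path without back-tracking; $\mathcal{C}_{B,t}$ is the set of bonds lying on a cycle of length at most $t$. *)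

From Stdlib Require Import Reals Lra List.
Import ListNotations.
Open Scope R_scope.

Definition Cpx := (R * R)%type.
Definition C0 : Cpx := (0, 0).
Definition C1 : Cpx := (1, 0).
Definition RtoC (x : R) : Cpx := (x, 0).
Definition Cadd (z w : Cpx) : Cpx := (fst z + fst w, snd z + snd w).
Definition Csub (z w : Cpx) : Cpx := (fst z - fst w, snd z - snd w).
Definition Cmul (z w : Cpx) : Cpx :=
  (fst z * fst w - snd z * snd w, fst z * snd w + snd z * fst w).
Definition Cconj (z : Cpx) : Cpx := (fst z, - snd z).
Definition Cabs2 (z : Cpx) : R := fst z ^ 2 + snd z ^ 2.
Definition Cabs (z : Cpx) : R := sqrt (Cabs2 z).
Definition Cexpi (x : R) : Cpx := (cos x, sin x).

Definition Csum (n : nat) (F : nat -> Cpx) : Cpx :=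
  fold_right (fun i acc => Cadd (F i) acc) C0 (seq 0 n).

Definition Cmatmul (n : nat) (A B : nat -> nat -> Cpx) : nat -> nat -> Cpx :=
  fun i j => Csum n (fun k => Cmul (A i k) (B k j)).
Fixpoint Cmatpow (n : nat) (A : nat -> nat -> Cpx) (t : nat) : nat -> nat -> Cpx :=
  match t with
  | O => fun i j => if Nat.eqb i j then C1 else C0
  | S t' => Cmatmul n (Cmatpow n A t') A
  end.
Definition Cmatvec (n : nat) (A : nat -> nat -> Cpx) (f : nat -> Cpx) : nat -> Cpx :=
  fun i => Csum n (fun j => Cmul (A i j) (f j)).
Definition Cinner (n : nat) (x y : nat -> Cpx) : Cpx :=
  Csum n (fun i => Cmul (Cconj (x i)) (y i)).

(* Directed bonds are 0..2B-1: directed bond 2j runs from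
   fst (ends j) to snd (ends j), directed bond 2j+1 runs backwards. *)
Definition und (b : nat) : nat := Nat.div b 2.
Definition dorig (ends : nat -> nat * nat) (b : nat) : nat :=
  if Nat.even b then fst (ends (und b)) else snd (ends (und b)).
Definition dterm (ends : nat -> nat * nat) (b : nat) : nat :=
  if Nat.even b then snd (ends (und b)) else fst (ends (und b)).
Definition drev (b : nat) : nat := if Nat.even b then S b else Nat.pred b.

Definition incb (ends : nat -> nat * nat) (v j : nat) : bool :=
  orb (Nat.eqb (fst (ends j)) v) (Nat.eqb (snd (ends j)) v).

Definition simple_graph (V B : nat) (ends : nat -> nat * nat) : Prop :=
  (forall j, (j < B)%nat ->
     (fst (ends j) < V)%nat /\ (snd (ends j) < V)%nat /\ fst (ends j) <> snd (ends j)) /\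
  (forall j j', (j < B)%nat -> (j' < B)%nat -> j <> j' ->
     ends j <> ends j' /\ ends j <> (snd (ends j'), fst (ends j'))).

Definition degree (B : nat) (ends : nat -> nat * nat) (v : nat) : nat :=
  length (filter (incb ends v) (seq 0 B)).

Definition regular (V B : nat) (ends : nat -> nat * nat) (d : nat) : Prop :=
  forall v, (v < V)%nat -> degree B ends v = d.

(* ---------- Vertex scattering matrices ----------
   sigma v j j' is the entry of sigma_v in the row of bond j and the column
   of bond j' (only bonds j, j' incident to v are meaningful). *)
Definition vertex_unitary (V B : nat) (ends : nat -> nat * nat)
  (sigma : nat -> nat -> nat -> Cpx) : Prop :=
  forall v j j', (v < V)%nat -> (j < B)%nat -> (j' < B)%nat ->
    incb ends v j = true -> incb ends v j' = true ->
    Csum B (fun k => if incb ends v k then Cmul (Cconj (sigma v k j)) (sigma v k j') else C0)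
      = (if Nat.eqb j j' then C1 else C0) /\
    Csum B (fun k => if incb ends v k then Cmul (sigma v j k) (Cconj (sigma v j' k)) else C0)
      = (if Nat.eqb j j' then C1 else C0).

Definition no_backscatter (V B : nat) (ends : nat -> nat * nat)
  (sigma : nat -> nat -> nat -> Cpx) : Prop :=
  forall v j, (v < V)%nat -> (j < B)%nat -> incb ends v j = true -> sigma v j j = C0.

Definition Smat (ends : nat -> nat * nat) (sigma : nat -> nat -> nat -> Cpx)
  : nat -> nat -> Cpx :=
  fun b c => if Nat.eqb (dterm ends b) (dorig ends c)
             then sigma (dterm ends b) (und c) (und b) else C0.

Definition Umat (L : nat -> R) (ends : nat -> nat * nat)
  (sigma : nat -> nat -> nat -> Cpx) (k : R) : nat -> nat -> Cpx :=
  fun b c => Cmul (Cexpi (k * L (und b))) (Smat ends sigma b c).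

Definition Mmat (ends : nat -> nat * nat) (sigma : nat -> nat -> nat -> Cpx)
  : nat -> nat -> Cpx :=
  fun b c => RtoC (Cabs2 (Smat ends sigma b c)).

Definition is_time_average (g : R -> R) (m : R) : Prop :=
  forall eps, 0 < eps -> exists K0, forall K, K0 < K -> 0 < K ->
    exists pr : Riemann_integrable g 0 K, Rabs (RiemannInt pr / K - m) < eps.

Definition is_Mtilde (B : nat) (L : nat -> R) (ends : nat -> nat * nat)
  (sigma : nat -> nat -> nat -> Cpx) (t : nat) (Mt : nat -> nat -> R) : Prop :=
  forall b c, (b < 2 * B)%nat -> (c < 2 * B)%nat ->
    is_time_average
      (fun k => Cabs2 (Cmatpow (2 * B) (Umat L ends sigma k) t b c)) (Mt b c).

Definition is_cycle (B : nat) (ends : nat -> nat * nat) (p : list nat) : Prop :=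
  p <> [] /\ (forall b, In b p -> (b < 2 * B)%nat) /\
  (forall i, (i < length p)%nat ->
     dterm ends (nth i p 0%nat) = dorig ends (nth (Nat.modulo (S i) (length p)) p 0%nat) /\
     nth (Nat.modulo (S i) (length p)) p 0%nat <> drev (nth i p 0%nat)).

Definition on_short_cycle (B : nat) (ends : nat -> nat * nat) (n j : nat) : Prop :=
  exists p, is_cycle B ends p /\ (length p <= n)%nat /\ exists b, In b p /\ und b = j.

Definition card_bonds (B : nat) (P : nat -> Prop) (n : nat) : Prop :=
  exists l : list nat, NoDup l /\ (forall j, In j l <-> ((j < B)%nat /\ P j)) /\ length l = n.

(* Since |f_b| <= kappa, the left-hand side is at most kappa^2 times the l^1 distance between
   M~(t) and M^t.  Expanding U(k)^t over walks, |(U(k)^t)_bc|^2 is the constant (M^t)_bc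
   whenever at most one walk of length t with nonzero amplitude joins b to c, so row b of M~(t)
   equals that of M^t unless two distinct such walks with common ends exist; both rows being
   stochastic, they then differ by at most 2 in l^1.  Without back-scattering these walks are
   non-backtracking, so they branch at some bond e and rejoin, closing a cycle of length at
   most 2t through two distinct successors of e.  Row b is thus charged to a non-backtracking
   path of length m <= t - 3 from b to e followed by two steps into bonds of C_{B,2T}.  The
   non-backtracking matrix has column sums d - 1, so summing over b costs
   2 (d - 1) |C_{B,2T}| sum_{m < t - 2} (d - 1)^m, and the geometric series gives the bound. *)

From Stdlib Require Import Reals List Lra Lia Classical.
From Coquelicot Require Complex.
Import ListNotations.
Open Scope R_scope.

(** * Finite sums and complex numbers *)

Fixpoint Rsum (n : nat) (F : nat -> R) : R :=
  match n with O => 0 | S n' => Rsum n' F + F n' end.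

Definition b2r (x : bool) : R := if x then 1 else 0.

Lemma b2r_ge0 x : 0 <= b2r x.
Proof. destruct x; simpl; lra. Qed.

Lemma Rsum_ext n F G : (forall i, (i < n)%nat -> F i = G i) -> Rsum n F = Rsum n G.
Proof.
  induction n as [|n IH]; intro H; simpl; [reflexivity|].
  rewrite IH, H; [reflexivity|lia|intros; apply H; lia].
Qed.

Lemma Rsum_le n F G : (forall i, (i < n)%nat -> F i <= G i) -> Rsum n F <= Rsum n G.
Proof.
  induction n as [|n IH]; intro H; simpl; [lra|].
  assert (Rsum n F <= Rsum n G) by (apply IH; intros; apply H; lia).
  assert (F n <= G n) by (apply H; lia). lra.
Qed.

Lemma Rsum_const0 n : Rsum n (fun _ => 0) = 0.
Proof. induction n; simpl; [|rewrite IHn]; ring. Qed.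

Lemma Rsum_ge0 n F : (forall i, (i < n)%nat -> 0 <= F i) -> 0 <= Rsum n F.
Proof. intro H. rewrite <- (Rsum_const0 n). now apply Rsum_le. Qed.

Lemma Rsum_plus n F G : Rsum n (fun i => F i + G i) = Rsum n F + Rsum n G.
Proof. induction n; simpl; [|rewrite IHn]; ring. Qed.

Lemma Rsum_minus n F G : Rsum n (fun i => F i - G i) = Rsum n F - Rsum n G.
Proof. induction n; simpl; [|rewrite IHn]; ring. Qed.

Lemma Rsum_mult_l n a F : Rsum n (fun i => a * F i) = a * Rsum n F.
Proof. induction n; simpl; [|rewrite IHn]; ring. Qed.

Lemma Rsum_mult_r n a F : Rsum n (fun i => F i * a) = Rsum n F * a.
Proof. induction n; simpl; [|rewrite IHn]; ring. Qed.

Lemma Rsum_swap n m (F : nat -> nat -> R) :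
  Rsum n (fun i => Rsum m (fun j => F i j)) = Rsum m (fun j => Rsum n (fun i => F i j)).
Proof.
  induction n; simpl; [now rewrite Rsum_const0|].
  now rewrite IHn, <- Rsum_plus.
Qed.

Lemma Rsum_double m (g : nat -> R) :
  Rsum (2 * m) g = Rsum m (fun j => g (2 * j)%nat + g (2 * j + 1)%nat).
Proof.
  induction m; [reflexivity|].
  replace (2 * S m)%nat with (S (S (2 * m))) by lia.
  cbn [Rsum]. rewrite IHm. replace (S (2 * m)) with (2 * m + 1)%nat by lia. ring.
Qed.

Lemma Rsum_single n F j : (j < n)%nat ->
  (forall i, (i < n)%nat -> i <> j -> F i = 0) -> Rsum n F = F j.
Proof.
  induction n; intros Hj H; [lia|]. simpl.
  destruct (Nat.eq_dec j n) as [->|Hne].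
  - rewrite (Rsum_ext n F (fun _ => 0)), Rsum_const0 by (intros; apply H; lia). ring.
  - rewrite IHn, (H n) by (lia || intros; apply H; lia). ring.
Qed.

Lemma Rsum_indicator n j : (j < n)%nat -> Rsum n (fun i => b2r (Nat.eqb i j)) = 1.
Proof.
  intro Hj. rewrite (Rsum_single n _ j Hj), Nat.eqb_refl; [reflexivity|].
  intros i _ Hi. now apply Nat.eqb_neq in Hi as ->.
Qed.

Lemma Rsum_ge_term n F j : (j < n)%nat ->
  (forall i, (i < n)%nat -> 0 <= F i) -> F j <= Rsum n F.
Proof.
  intros Hj H.
  transitivity (Rsum n (fun i => if Nat.eq_dec i j then F i else 0)).
  - rewrite (Rsum_single n _ j Hj); [now destruct (Nat.eq_dec j j)|].
    intros i _ Hi. now destruct (Nat.eq_dec i j).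
  - apply Rsum_le. intros i Hi. destruct (Nat.eq_dec i j); [lra|now apply H].
Qed.

Lemma Cpx_eq (z w : Cpx) : fst z = fst w -> snd z = snd w -> z = w.
Proof. destruct z, w; simpl; intros -> ->; reflexivity. Qed.

Ltac Cpx_ring :=
  apply Cpx_eq; unfold Cadd, Csub, Cmul, Cconj, RtoC, C0, C1; simpl; ring.

Lemma Cmul_comm z w : Cmul z w = Cmul w z.
Proof. Cpx_ring. Qed.

Lemma Csum_S n F : Csum (S n) F = Cadd (Csum n F) (F n).
Proof.
  unfold Csum. rewrite seq_S, fold_right_app. simpl.
  induction (seq 0 n) as [|x l IH]; simpl; [|rewrite IH]; Cpx_ring.
Qed.

Lemma Csum_Rsum n F :
  Csum n F = (Rsum n (fun i => fst (F i)), Rsum n (fun i => snd (F i))).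
Proof.
  induction n as [|n IH]; [reflexivity|].
  rewrite Csum_S, IH. reflexivity.
Qed.

Lemma Csum_ext n F G : (forall i, (i < n)%nat -> F i = G i) -> Csum n F = Csum n G.
Proof.
  intro H. rewrite !Csum_Rsum. f_equal; apply Rsum_ext; intros i Hi; now rewrite H.
Qed.

Lemma Csum_zero n F : (forall i, (i < n)%nat -> F i = C0) -> Csum n F = C0.
Proof.
  intro H. rewrite (Csum_ext n F (fun _ => C0)), Csum_Rsum by exact H.
  simpl. now rewrite Rsum_const0.
Qed.

Lemma Csum_single n F j : (j < n)%nat ->
  (forall i, (i < n)%nat -> i <> j -> F i = C0) -> Csum n F = F j.
Proof.
  intros Hj H. rewrite Csum_Rsum, !(Rsum_single n _ j Hj); [now destruct (F j)| |];
    intros i Hi Hne; now rewrite H.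
Qed.

Lemma Csum_double m (g : nat -> Cpx) :
  Csum (2 * m) g = Csum m (fun j => Cadd (g (2 * j)%nat) (g (2 * j + 1)%nat)).
Proof. rewrite !Csum_Rsum, !Rsum_double. reflexivity. Qed.

Lemma Csum_mul_l n a F : Csum n (fun i => Cmul a (F i)) = Cmul a (Csum n F).
Proof.
  rewrite !Csum_Rsum. unfold Cmul. simpl.
  rewrite !Rsum_minus, !Rsum_plus, !Rsum_mult_l. reflexivity.
Qed.

Lemma Cconj_Csum n F : Cconj (Csum n F) = Csum n (fun i => Cconj (F i)).
Proof.
  rewrite !Csum_Rsum. unfold Cconj. simpl. f_equal.
  replace (- Rsum n (fun i => snd (F i))) with (-1 * Rsum n (fun i => snd (F i))) by ring.
  rewrite <- Rsum_mult_l. apply Rsum_ext. intros; ring.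
Qed.

Lemma Csub_Csum n F G : Csub (Csum n F) (Csum n G) = Csum n (fun i => Csub (F i) (G i)).
Proof. rewrite !Csum_Rsum. unfold Csub. simpl. now rewrite !Rsum_minus. Qed.

Lemma Csum_RtoC n F : Csum n (fun i => RtoC (F i)) = RtoC (Rsum n F).
Proof. rewrite Csum_Rsum. simpl. now rewrite Rsum_const0. Qed.

Lemma Csum_swap n m (F : nat -> nat -> Cpx) :
  Csum n (fun i => Csum m (fun j => F i j)) = Csum m (fun j => Csum n (fun i => F i j)).
Proof.
  rewrite !Csum_Rsum. f_equal.
  - rewrite (Rsum_ext n _ (fun i => Rsum m (fun j => fst (F i j))))
      by (intros; now rewrite Csum_Rsum).
    rewrite Rsum_swap. apply Rsum_ext. intros. now rewrite Csum_Rsum.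
  - rewrite (Rsum_ext n _ (fun i => Rsum m (fun j => snd (F i j))))
      by (intros; now rewrite Csum_Rsum).
    rewrite Rsum_swap. apply Rsum_ext. intros. now rewrite Csum_Rsum.
Qed.

Lemma Csum_mul_Csum n m F G :
  Cmul (Csum n F) (Csum m G) = Csum n (fun i => Csum m (fun j => Cmul (F i) (G j))).
Proof.
  transitivity (Csum n (fun i => Cmul (F i) (Csum m G))).
  - rewrite (Csum_ext n (fun i => Cmul (F i) (Csum m G)) (fun i => Cmul (Csum m G) (F i))),
      Csum_mul_l
      by (intros; apply Cmul_comm). apply Cmul_comm.
  - apply Csum_ext. intros. now rewrite Csum_mul_l.
Qed.

Lemma Cabs2_ge0 z : 0 <= Cabs2 z.
Proof. unfold Cabs2. nra. Qed.

Lemma Cabs2_C0 : Cabs2 C0 = 0.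
Proof. unfold Cabs2, C0; simpl; ring. Qed.

Lemma Cabs2_mul z w : Cabs2 (Cmul z w) = Cabs2 z * Cabs2 w.
Proof. destruct z, w; unfold Cabs2, Cmul; simpl; ring. Qed.

Lemma Cabs2_Cexpi x : Cabs2 (Cexpi x) = 1.
Proof.
  unfold Cabs2, Cexpi. simpl. pose proof (sin2_cos2 x) as E. unfold Rsqr in E. lra.
Qed.

Lemma Cabs2_as_product z : RtoC (Cabs2 z) = Cmul z (Cconj z).
Proof. unfold Cabs2. Cpx_ring. Qed.

Lemma Cabs_ge0 z : 0 <= Cabs z.
Proof. exact (Coquelicot.Complex.Cmod_ge_0 z). Qed.

Lemma Cabs_mul z w : Cabs (Cmul z w) = Cabs z * Cabs w.
Proof. exact (Coquelicot.Complex.Cmod_mult z w). Qed.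

Lemma Cabs_conj z : Cabs (Cconj z) = Cabs z.
Proof. exact (Coquelicot.Complex.Cmod_conj z). Qed.

Lemma Cabs_RtoC x : Cabs (RtoC x) = Rabs x.
Proof. exact (Coquelicot.Complex.Cmod_R x). Qed.

Lemma Cabs_Csum n F : Cabs (Csum n F) <= Rsum n (fun i => Cabs (F i)).
Proof.
  induction n as [|n IH]; simpl.
  - rewrite <- Coquelicot.Complex.Cmod_0. apply Rle_refl.
  - rewrite Csum_S. eapply Rle_trans; [apply Coquelicot.Complex.Cmod_triangle|].
    now apply Rplus_le_compat_r.
Qed.

(** * Directed bonds *)

Lemma und_even j : und (2 * j) = j.
Proof. unfold und. rewrite <- Nat.div2_div. apply Nat.div2_double. Qed.

Lemma und_odd j : und (2 * j + 1) = j.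
Proof. unfold und. rewrite <- Nat.div2_div. apply Nat.div2_odd'. Qed.

Lemma even_even_bond j : Nat.even (2 * j) = true.
Proof. apply Nat.even_even. Qed.

Lemma even_odd_bond j : Nat.even (2 * j + 1) = false.
Proof. rewrite Nat.add_1_r, Nat.even_succ, <- Nat.negb_even, Nat.even_even. reflexivity. Qed.

Lemma dbond_cases b : (exists j, b = 2 * j)%nat \/ (exists j, b = 2 * j + 1)%nat.
Proof. destruct (Nat.Even_or_Odd b) as [[j Hj]|[j Hj]]; [left|right]; exists j; lia. Qed.

Lemma drev_even j : drev (2 * j) = (2 * j + 1)%nat.
Proof. unfold drev. rewrite even_even_bond. lia. Qed.

Lemma drev_odd j : drev (2 * j + 1) = (2 * j)%nat.
Proof. unfold drev. rewrite even_odd_bond. lia. Qed.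

Lemma drevK b : drev (drev b) = b.
Proof.
  destruct (dbond_cases b) as [[j ->]|[j ->]];
    [rewrite drev_even, drev_odd | rewrite drev_odd, drev_even]; reflexivity.
Qed.

Lemma und_drev b : und (drev b) = und b.
Proof.
  destruct (dbond_cases b) as [[j ->]|[j ->]];
    [rewrite drev_even | rewrite drev_odd]; now rewrite und_odd, und_even.
Qed.

Lemma drev_lt B b : (b < 2 * B)%nat -> (drev b < 2 * B)%nat.
Proof. destruct (dbond_cases b) as [[j ->]|[j ->]]; [rewrite drev_even|rewrite drev_odd]; lia. Qed.

Lemma und_lt B b : (b < 2 * B)%nat -> (und b < B)%nat.
Proof. destruct (dbond_cases b) as [[j ->]|[j ->]]; [rewrite und_even|rewrite und_odd]; lia. Qed.

Lemma degree_as_Rsum B ends v :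
  INR (degree B ends v) = Rsum B (fun j => b2r (incb ends v j)).
Proof.
  unfold degree. induction B as [|m IH]; [reflexivity|].
  rewrite seq_S, filter_app, length_app. simpl. rewrite plus_INR, IH.
  unfold b2r. destruct (incb ends v m); simpl; ring.
Qed.

Section DirectedBonds.

Variable ends : nat -> nat * nat.

Lemma dorig_even j : dorig ends (2 * j) = fst (ends j).
Proof. unfold dorig. now rewrite even_even_bond, und_even. Qed.

Lemma dterm_even j : dterm ends (2 * j) = snd (ends j).
Proof. unfold dterm. now rewrite even_even_bond, und_even. Qed.

Lemma dorig_odd j : dorig ends (2 * j + 1) = snd (ends j).
Proof. unfold dorig. now rewrite even_odd_bond, und_odd. Qed.

Lemma dterm_odd j : dterm ends (2 * j + 1) = fst (ends j).
Proof. unfold dterm. now rewrite even_odd_bond, und_odd. Qed.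

Lemma dorig_drev b : dorig ends (drev b) = dterm ends b.
Proof.
  destruct (dbond_cases b) as [[j ->]|[j ->]];
    [rewrite drev_even, dorig_odd, dterm_even | rewrite drev_odd, dorig_even, dterm_odd];
    reflexivity.
Qed.

Lemma dterm_drev b : dterm ends (drev b) = dorig ends b.
Proof. rewrite <- (drevK b) at 2. now rewrite dorig_drev. Qed.

Lemma incb_dterm b : incb ends (dterm ends b) (und b) = true.
Proof.
  unfold incb. destruct (dbond_cases b) as [[j ->]|[j ->]];
    [rewrite dterm_even, und_even | rewrite dterm_odd, und_odd];
    rewrite !Nat.eqb_refl; auto using Bool.orb_true_r.
Qed.

Variables V B : nat.
Hypothesis SG : simple_graph V B ends.

Lemma dorig_lt b : (b < 2 * B)%nat -> (dorig ends b < V)%nat.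
Proof.
  intro Hb. destruct (dbond_cases b) as [[j ->]|[j ->]];
    [rewrite dorig_even | rewrite dorig_odd]; apply (proj1 SG); lia.
Qed.

Lemma dterm_lt b : (b < 2 * B)%nat -> (dterm ends b < V)%nat.
Proof.
  intro Hb. destruct (dbond_cases b) as [[j ->]|[j ->]];
    [rewrite dterm_even | rewrite dterm_odd]; apply (proj1 SG); lia.
Qed.

Lemma und_inj_dterm b b' : (b < 2 * B)%nat -> (b' < 2 * B)%nat ->
  und b = und b' -> dterm ends b = dterm ends b' -> b = b'.
Proof.
  intros Hb Hb' Hu Ht.
  destruct (dbond_cases b) as [[j ->]|[j ->]], (dbond_cases b') as [[j' ->]|[j' ->]];
    rewrite ?und_even, ?und_odd in Hu; subst j'; try reflexivity; exfalso;
    rewrite ?dterm_even, ?dterm_odd in Ht; apply (proj1 SG j); lia || auto.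
Qed.

Lemma dbond_eq_of_ends b b' : (b < 2 * B)%nat -> (b' < 2 * B)%nat ->
  dorig ends b = dorig ends b' -> dterm ends b = dterm ends b' -> b = b'.
Proof.
  intros Hb Hb' Ho Ht.
  destruct (Nat.eq_dec (und b) (und b')) as [Hu|Hu]; [now apply und_inj_dterm|].
  exfalso. destruct (proj2 SG (und b) (und b')) as [N1 N2]; try apply und_lt; auto.
  unfold dorig, dterm in Ho, Ht.
  destruct (Nat.even b), (Nat.even b'); destruct (ends (und b)), (ends (und b'));
    simpl in *; subst; auto.
Qed.

Lemma in_degree d v : regular V B ends d -> (v < V)%nat ->
  Rsum (2 * B) (fun e => b2r (Nat.eqb (dterm ends e) v)) = INR d.
Proof.
  intros REG Hv. rewrite <- (REG v Hv), degree_as_Rsum, Rsum_double.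
  apply Rsum_ext. intros j Hj. rewrite dterm_even, dterm_odd. unfold incb.
  destruct (proj1 SG j Hj) as [_ [_ Hne]].
  destruct (Nat.eqb_spec (snd (ends j)) v), (Nat.eqb_spec (fst (ends j)) v);
    simpl; lra || congruence.
Qed.

End DirectedBonds.

(** * Unitarity of the scattering matrices *)

Definition orthonormal_rows (n : nat) (A : nat -> nat -> Cpx) : Prop :=
  forall k k', (k < n)%nat -> (k' < n)%nat ->
    Csum n (fun c => Cmul (A k c) (Cconj (A k' c))) = if Nat.eqb k k' then C1 else C0.

Lemma RtoC_inj x y : RtoC x = RtoC y -> x = y.
Proof. intro E. exact (f_equal fst E). Qed.

Lemma orthonormal_rows_preserve_norm n A (x : nat -> Cpx) : orthonormal_rows n A ->
  Rsum n (fun c => Cabs2 (Csum n (fun k => Cmul (x k) (A k c)))) = Rsum n (fun k => Cabs2 (x k)).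
Proof.
  intro HA. apply RtoC_inj. rewrite <- !Csum_RtoC.
  rewrite (Csum_ext n _ (fun c => Csum n (fun k => Csum n (fun k' =>
      Cmul (Cmul (x k) (Cconj (x k'))) (Cmul (A k c) (Cconj (A k' c))))))).
  2:{ intros c _. rewrite Cabs2_as_product, Cconj_Csum, Csum_mul_Csum.
      apply Csum_ext; intros; apply Csum_ext; intros. Cpx_ring. }
  rewrite Csum_swap.
  apply Csum_ext. intros k Hk. rewrite Csum_swap.
  rewrite (Csum_ext n _ (fun k' => Cmul (Cmul (x k) (Cconj (x k')))
                                   (if Nat.eqb k k' then C1 else C0))).
  2:{ intros k' Hk'. now rewrite Csum_mul_l, HA. }
  rewrite (Csum_single n _ k Hk), Nat.eqb_refl, Cabs2_as_product; [Cpx_ring|].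
  intros k' _ Hne. apply Nat.eqb_neq in Hne. rewrite Nat.eqb_sym, Hne. Cpx_ring.
Qed.

Lemma Cmatpow_row_norm n A t b : orthonormal_rows n A -> (b < n)%nat ->
  Rsum n (fun c => Cabs2 (Cmatpow n A t b c)) = 1.
Proof.
  intros HA Hb. induction t as [|t IH]; simpl.
  - rewrite (Rsum_single _ _ b Hb), Nat.eqb_refl.
    + unfold Cabs2, C1. simpl. ring.
    + intros i _ Hne. rewrite (proj2 (Nat.eqb_neq b i)) by auto. apply Cabs2_C0.
  - unfold Cmatmul. now rewrite orthonormal_rows_preserve_norm.
Qed.

Section Scattering.

Variables (V B : nat) (ends : nat -> nat * nat) (sigma : nat -> nat -> nat -> Cpx).
Hypothesis SG : simple_graph V B ends.
Hypothesis VU : vertex_unitary V B ends sigma.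

Lemma Smat_row_dot_same_vertex b b' : dterm ends b = dterm ends b' ->
  Csum (2 * B) (fun c => Cmul (Smat ends sigma b c) (Cconj (Smat ends sigma b' c))) =
  Csum B (fun j => if incb ends (dterm ends b) j
                   then Cmul (Cconj (sigma (dterm ends b) j (und b')))
                             (sigma (dterm ends b) j (und b))
                   else C0).
Proof.
  (* Of the two orientations of a bond at [v], exactly one leaves [v]. *)
  intro Ht. unfold Smat. rewrite <- Ht, Csum_double. set (v := dterm ends b).
  apply Csum_ext. intros j Hj.
  rewrite dorig_even, dorig_odd, und_even, und_odd. unfold incb.
  destruct (proj1 SG j Hj) as [_ [_ Hne]].
  destruct (Nat.eqb_spec v (fst (ends j))), (Nat.eqb_spec v (snd (ends j)));
    destruct (Nat.eqb_spec (fst (ends j)) v), (Nat.eqb_spec (snd (ends j)) v);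
    simpl; congruence || Cpx_ring.
Qed.

Lemma Smat_orthonormal_rows : orthonormal_rows (2 * B) (Smat ends sigma).
Proof.
  intros b b' Hb Hb'.
  destruct (Nat.eq_dec (dterm ends b) (dterm ends b')) as [Ht|Ht].
  - rewrite (Smat_row_dot_same_vertex b b' Ht).
    assert (Hv : (dterm ends b < V)%nat) by now apply (dterm_lt ends V B).
    assert (Hinc' : incb ends (dterm ends b) (und b') = true)
      by (rewrite Ht; apply incb_dterm).
    rewrite (proj1 (VU _ _ _ Hv (und_lt B b' Hb') (und_lt B b Hb) Hinc' (incb_dterm ends b))).
    destruct (Nat.eqb_spec b b') as [->|Hne]; [now rewrite Nat.eqb_refl|].
    destruct (Nat.eqb_spec (und b') (und b)) as [Hu|]; [|reflexivity].
    exfalso. apply Hne. apply (und_inj_dterm ends V B); auto.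
  - destruct (Nat.eqb_spec b b') as [->|_]; [congruence|].
    apply Csum_zero. intros c _. unfold Smat.
    destruct (Nat.eqb_spec (dterm ends b) (dorig ends c)),
             (Nat.eqb_spec (dterm ends b') (dorig ends c)); congruence || Cpx_ring.
Qed.

Lemma Umat_orthonormal_rows L k : orthonormal_rows (2 * B) (Umat L ends sigma k).
Proof.
  intros b b' Hb Hb'. unfold Umat.
  set (phase := Cmul (Cexpi (k * L (und b))) (Cconj (Cexpi (k * L (und b'))))).
  rewrite (Csum_ext _ _ (fun c => Cmul phase
             (Cmul (Smat ends sigma b c) (Cconj (Smat ends sigma b' c))))) by (intros; Cpx_ring).
  rewrite Csum_mul_l, Smat_orthonormal_rows by assumption.
  destruct (Nat.eqb_spec b b') as [<-|]; [|Cpx_ring].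
  unfold phase. rewrite <- Cabs2_as_product, Cabs2_Cexpi. Cpx_ring.
Qed.

Lemma Smat_row_abs2_sum b : (b < 2 * B)%nat ->
  Rsum (2 * B) (fun c => Cabs2 (Smat ends sigma b c)) = 1.
Proof.
  intro Hb. pose proof (Smat_orthonormal_rows b b Hb Hb) as H.
  rewrite Nat.eqb_refl in H. apply RtoC_inj. rewrite <- Csum_RtoC.
  transitivity C1; [|reflexivity]. rewrite <- H. apply Csum_ext. intros.
  apply Cabs2_as_product.
Qed.

End Scattering.

Lemma Umat_abs2 L ends sigma x j c :
  Cabs2 (Umat L ends sigma x j c) = Cabs2 (Smat ends sigma j c).
Proof. unfold Umat. rewrite Cabs2_mul, Cabs2_Cexpi. ring. Qed.

(** * Walks and entries of matrix powers *)

Fixpoint Rmatpow (n : nat) (A : nat -> nat -> R) (t : nat) (b c : nat) : R :=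
  match t with
  | O => b2r (Nat.eqb b c)
  | S t' => Rsum n (fun j => Rmatpow n A t' b j * A j c)
  end.

Lemma Cmatpow_RtoC n A t b c :
  Cmatpow n (fun i j => RtoC (A i j)) t b c = RtoC (Rmatpow n A t b c).
Proof.
  revert c. induction t as [|t IH]; intro c; simpl.
  - now destruct (Nat.eqb b c).
  - unfold Cmatmul. rewrite <- Csum_RtoC. apply Csum_ext. intros i _.
    rewrite IH. Cpx_ring.
Qed.

Lemma Rmatpow_ge0 n A t b c : (forall i j, 0 <= A i j) -> 0 <= Rmatpow n A t b c.
Proof.
  intro HA. revert c. induction t as [|t IH]; intro c; simpl.
  - apply b2r_ge0.
  - apply Rsum_ge0. intros. now apply Rmult_le_pos.
Qed.

Lemma Rmatpow_row_sum n A t b : (b < n)%nat ->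
  (forall j, (j < n)%nat -> Rsum n (fun c => A j c) = 1) ->
  Rsum n (fun c => Rmatpow n A t b c) = 1.
Proof.
  intros Hb HA. induction t as [|t IH]; simpl.
  - rewrite (Rsum_ext _ _ (fun c => b2r (Nat.eqb c b))) by (intros; now rewrite Nat.eqb_sym).
    now apply Rsum_indicator.
  - rewrite Rsum_swap, <- IH. apply Rsum_ext. intros j Hj.
    rewrite Rsum_mult_l, HA by assumption. ring.
Qed.

Section Walks.

Variables (B : nat) (ends : nat -> nat * nat) (sigma : nat -> nat -> nat -> Cpx).

Let n := (2 * B)%nat.
Let Sm := Smat ends sigma.

Definition wend (b : nat) (l : list nat) : nat := match l with [] => b | c :: _ => c end.

(* A walk from [b] with nonzero scattering amplitude, stored last step first so that
   it peels off like [Cmatpow n A (S t) = Cmatpow n A t * A]. *)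
Fixpoint swalk (b : nat) (l : list nat) : Prop :=
  match l with
  | [] => True
  | c :: l' => swalk b l' /\ (c < n)%nat /\ Sm (wend b l') c <> C0
  end.

Lemma wend_lt b l : (b < n)%nat -> swalk b l -> (wend b l < n)%nat.
Proof. destruct l; simpl; tauto. Qed.

Definition walks_unique (b t : nat) : Prop :=
  forall l l', swalk b l -> swalk b l' -> length l = t -> length l' = t ->
    wend b l = wend b l' -> l = l'.

Variable L : nat -> R.

Let M i j := Cabs2 (Sm i j).
Let Upow t x := Cmatpow n (Umat L ends sigma x) t.
Let Mpow t := Rmatpow n M t.

Definition step_blocked (b t j c : nat) : Prop :=
  ((forall x, Upow t x b j = C0) /\ Mpow t b j = 0) \/ Sm j c = C0.

Lemma step_blocked_term b t j c : step_blocked b t j c ->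
  (forall x, Cmul (Upow t x b j) (Umat L ends sigma x j c) = C0) /\ Mpow t b j * M j c = 0.
Proof.
  unfold Umat, M. fold Sm. intros [[EU EM]|E]; split; intros; rewrite ?EU, ?EM, ?E;
    rewrite ?Cabs2_C0; ring || Cpx_ring.
Qed.

Lemma blocked_steps_vanish b t c :
  (forall j, (j < n)%nat -> step_blocked b t j c) ->
  (forall x, Upow (S t) x b c = C0) /\ Mpow (S t) b c = 0.
Proof.
  intro H. split.
  - intro x. apply Csum_zero. intros j Hj. apply (step_blocked_term _ _ _ _ (H j Hj)).
  - unfold Mpow. simpl. rewrite <- (Rsum_const0 n). apply Rsum_ext.
    intros j Hj. apply (step_blocked_term _ _ _ _ (H j Hj)).
Qed.

Lemma single_step_entry b t j0 c : (j0 < n)%nat ->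
  (forall j, (j < n)%nat -> j <> j0 -> step_blocked b t j c) ->
  (forall x, Upow (S t) x b c = Cmul (Upow t x b j0) (Umat L ends sigma x j0 c)) /\
  Mpow (S t) b c = Mpow t b j0 * M j0 c.
Proof.
  intros Hj0 H. split.
  - intro x.
    apply (Csum_single _ (fun j => Cmul (Upow t x b j) (Umat L ends sigma x j c)) j0 Hj0).
    intros j Hj Hne. apply (step_blocked_term _ _ _ _ (H j Hj Hne)).
  - apply (Rsum_single _ (fun j => Mpow t b j * M j c) j0 Hj0).
    intros j Hj Hne. apply (step_blocked_term _ _ _ _ (H j Hj Hne)).
Qed.

Lemma no_walk_entry_vanish b t : forall c, (c < n)%nat ->
  (forall l, swalk b l -> length l = t -> wend b l <> c) ->
  (forall x, Upow t x b c = C0) /\ Mpow t b c = 0.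
Proof.
  induction t as [|t IH]; intros c Hc H.
  - assert (Hbc : b <> c) by (apply (H []); simpl; auto).
    apply Nat.eqb_neq in Hbc. unfold Upow, Mpow. simpl. now rewrite Hbc.
  - apply blocked_steps_vanish. intros j Hj.
    destruct (classic (Sm j c = C0)) as [E|E]; [now right|left].
    apply IH; [assumption|]. intros l Hl Hlen Hend.
    apply (H (c :: l)); simpl; [rewrite Hend| |]; auto.
Qed.

Lemma unique_walk_entry b t : (b < n)%nat -> forall l, swalk b l -> length l = t ->
  (forall l', swalk b l' -> length l' = t -> wend b l' = wend b l -> l' = l) ->
  forall x, Cabs2 (Upow t x b (wend b l)) = Mpow t b (wend b l).
Proof.
  intro Hb. induction t as [|t IH]; intros l Hl Hlen Hu x.
  - destruct l; [|discriminate]. unfold Upow, Mpow. simpl. rewrite Nat.eqb_refl.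
    unfold Cabs2, C1, b2r. simpl. ring.
  - destruct l as [|c l0]; [discriminate|]. injection Hlen as Hlen.
    destruct Hl as [Hl0 [Hc HS]]. simpl wend.
    assert (Hu0 : forall l', swalk b l' -> length l' = t -> wend b l' = wend b l0 -> l' = l0).
    { intros l' Hl' Hlen' He'. enough (c :: l' = c :: l0) by congruence.
      apply Hu; simpl; [rewrite He'| |]; auto. }
    destruct (single_step_entry b t (wend b l0) c) as [EU EM].
    + now apply wend_lt.
    + intros j Hj Hne. destruct (classic (Sm j c = C0)) as [E|E]; [now right|left].
      apply no_walk_entry_vanish; [assumption|]. intros l1 Hl1 Hlen1 Hend1.
      enough (c :: l1 = c :: l0) by (apply Hne; rewrite <- Hend1; congruence).
      apply Hu; simpl; [rewrite Hend1| |]; auto.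
    + rewrite EU, EM, Cabs2_mul, Umat_abs2. unfold Upow, Mpow, M in *.
      now rewrite IH.
Qed.

Lemma Upow_abs2_unique_walks b t c : (b < n)%nat -> (c < n)%nat -> walks_unique b t ->
  forall x, Cabs2 (Upow t x b c) = Mpow t b c.
Proof.
  intros Hb Hc Hu x.
  destruct (classic (exists l, swalk b l /\ length l = t /\ wend b l = c))
    as [[l [Hl [Hlen <-]]]|Hno].
  - apply (unique_walk_entry b t Hb l Hl Hlen).
    intros l' Hl' Hlen' He. now apply Hu.
  - destruct (no_walk_entry_vanish b t c Hc) as [EU EM].
    + intros l Hl Hlen He. apply Hno. eauto.
    + rewrite EU, EM. apply Cabs2_C0.
Qed.

End Walks.

(** * Time averages *)

Lemma time_average_witness g m eps : is_time_average g m -> 0 < eps ->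
  exists K (pr : Riemann_integrable g 0 K), 0 < K /\ Rabs (RiemannInt pr / K - m) < eps.
Proof.
  intros H Heps. destruct (H eps Heps) as [K0 HK].
  assert (HK0 : K0 < Rmax K0 0 + 1) by (pose proof (Rmax_l K0 0); lra).
  assert (Hpos : 0 < Rmax K0 0 + 1) by (pose proof (Rmax_r K0 0); lra).
  destruct (HK _ HK0 Hpos) as [pr Hpr]. eauto.
Qed.

Lemma RiemannInt_const_fun g a K (pr : Riemann_integrable g 0 K) : 0 <= K ->
  (forall k, g k = a) -> RiemannInt pr = a * K.
Proof.
  intros HK Hg. replace K with (K - 0) at 2 by ring.
  rewrite <- (RiemannInt_P15 (RiemannInt_P14 0 K a)).
  apply RiemannInt_P18; [assumption|]. intros. apply Hg.
Qed.

Lemma time_average_const g m a : is_time_average g m -> (forall k, g k = a) -> m = a.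
Proof.
  intros H Hg. destruct (Req_dec m a) as [|Hne]; [assumption|exfalso].
  destruct (time_average_witness g m (Rabs (m - a)) H) as [K [pr [HK Hpr]]].
  { apply Rabs_pos_lt. lra. }
  rewrite (RiemannInt_const_fun g a K pr), Rabs_minus_sym in Hpr by (lra || assumption).
  replace (a * K / K) with a in Hpr by (field; lra). lra.
Qed.

Lemma time_average_ge0 g m : is_time_average g m -> (forall k, 0 <= g k) -> 0 <= m.
Proof.
  intros H Hg. apply Rnot_lt_le. intro Hm.
  destruct (time_average_witness g m (- m) H) as [K [pr [HK Hpr]]]; [lra|].
  assert (Hint : 0 * (K - 0) <= RiemannInt pr).
  { rewrite <- (RiemannInt_P15 (RiemannInt_P14 0 K 0)).
    apply RiemannInt_P19; [lra|]. intros. apply Hg. }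
  assert (0 <= RiemannInt pr / K)
    by (unfold Rdiv; apply Rmult_le_pos; [lra|left; apply Rinv_0_lt_compat; lra]).
  rewrite Rabs_right in Hpr; lra.
Qed.

Lemma time_average_plus f g m1 m2 : is_time_average f m1 -> is_time_average g m2 ->
  is_time_average (fun k => f k + g k) (m1 + m2).
Proof.
  intros H1 H2 eps Heps.
  destruct (H1 (eps / 2)) as [K1 HK1]; [lra|].
  destruct (H2 (eps / 2)) as [K2 HK2]; [lra|].
  exists (Rmax K1 K2). intros K HK HK0.
  destruct (HK1 K) as [pr1 Hp1]; [pose proof (Rmax_l K1 K2); lra|assumption|].
  destruct (HK2 K) as [pr2 Hp2]; [pose proof (Rmax_r K1 K2); lra|assumption|].
  pose (pr := RiemannInt_P10 1 pr1 pr2).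
  assert (pr' : Riemann_integrable (fun k => f k + g k) 0 K)
    by (refine (@Riemann_integrable_ext _ _ 0 K _ pr); intros; ring).
  exists pr'.
  assert (E : RiemannInt pr' = RiemannInt pr1 + 1 * RiemannInt pr2).
  { rewrite <- (RiemannInt_P13 pr1 pr2 pr). apply RiemannInt_P18; [lra|]. intros; ring. }
  rewrite E.
  replace ((RiemannInt pr1 + 1 * RiemannInt pr2) / K - (m1 + m2)) with
    ((RiemannInt pr1 / K - m1) + (RiemannInt pr2 / K - m2)) by (field; lra).
  eapply Rle_lt_trans; [apply Rabs_triang|]. lra.
Qed.

Lemma time_average_Rsum N (g : nat -> R -> R) (m : nat -> R) :
  (forall c, (c < N)%nat -> is_time_average (g c) (m c)) ->
  is_time_average (fun k => Rsum N (fun c => g c k)) (Rsum N m).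
Proof.
  induction N as [|N IH]; intro H; simpl.
  - intros eps Heps. exists 0. intros K _ HK.
    exists (RiemannInt_P14 0 K 0).
    rewrite (RiemannInt_const_fun _ 0 K) by (lra || reflexivity).
    replace (0 * K / K - 0) with 0 by (field; lra). rewrite Rabs_R0. lra.
  - apply time_average_plus; [apply IH; intros|]; apply H; lia.
Qed.

(** * Non-backtracking paths and short cycles *)

Fixpoint path (P : nat -> nat -> Prop) (x : nat) (l : list nat) : Prop :=
  match l with [] => True | y :: l' => P x y /\ path P y l' end.

Lemma last_cons_default (l : list nat) x y : last (y :: l) x = last l y.
Proof.
  revert x y. induction l as [|z l IH]; intros x y; [reflexivity|].
  change (last (y :: z :: l) x) with (last (z :: l) x). now rewrite !IH.
Qed.

Lemma last_map_drev (l : list nat) x : last (map drev l) (drev x) = drev (last l x).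
Proof.
  revert x. induction l as [|y l IH]; intro x; [reflexivity|].
  simpl map. now rewrite !last_cons_default.
Qed.

Lemma last_rev_cons (l : list nat) x y m : rev (x :: l) = y :: m -> last m y = x.
Proof.
  intro E. rewrite <- (last_cons_default m x y), <- E. simpl. apply last_last.
Qed.

Lemma rev_cons_head (l : list nat) x y m : rev (x :: l) = y :: m -> y = last l x.
Proof.
  intro E. apply (f_equal (@rev nat)) in E. rewrite rev_involutive in E.
  rewrite <- last_cons_default with (x := 0%nat), E. simpl. now rewrite last_last.
Qed.

Lemma path_app P x l1 l2 : path P x (l1 ++ l2) <-> path P x l1 /\ path P (last l1 x) l2.
Proof.
  revert x. induction l1 as [|y l1 IH]; intro x; cbn [path app]; [tauto|].
  rewrite IH, last_cons_default. tauto.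
Qed.

Lemma path_impl (P Q : nat -> nat -> Prop) x l :
  (forall a b, P a b -> Q a b) -> path P x l -> path Q x l.
Proof. revert x. induction l; simpl; firstorder. Qed.

Lemma path_nth P x l i : path P x l -> (i < length l)%nat ->
  P (nth i (x :: l) 0%nat) (nth i l 0%nat).
Proof.
  revert x i. induction l as [|y l IH]; intros x i H Hi; simpl in *; [lia|].
  destruct i; [tauto|]. apply IH; [tauto|lia].
Qed.

Lemma path_rev P Q f x l : (forall a b, P a b -> Q (f b) (f a)) -> path P x l ->
  forall y m, rev (x :: l) = y :: m -> path Q (f y) (map f m).
Proof.
  intro Hf. induction l as [|w l IH] using rev_ind; intros Hp y m E.
  - injection E as <- <-. exact I.
  - apply path_app in Hp as [Hp [Hw _]].
    rewrite app_comm_cons, rev_app_distr in E. injection E as <- Em.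
    change (rev l ++ [x]) with (rev (x :: l)) in Em.
    destruct (rev (x :: l)) as [|y0 m0] eqn:Er; [simpl in Er; now destruct (app_eq_nil _ _ Er)|].
    subst m. cbn [map path]. split; [|exact (IH Hp y0 m0 eq_refl)].
    apply Hf. now rewrite (rev_cons_head l x y0 m0 Er).
Qed.

Lemma list_rejoin (q q' : list nat) d : length q = length q' -> last q d = last q' d ->
  hd d q <> hd d q' ->
  exists z a z' a' y r r', q = z :: a ++ y :: r /\ q' = z' :: a' ++ y :: r' /\
    length a = length a' /\ last a z <> last a' z'.
Proof.
  revert q'. induction q as [|x q IH]; intros [|x' q'] Hlen Hlast Hhd;
    simpl in Hlen, Hhd; try discriminate; [congruence|].
  injection Hlen as Hlen.
  destruct q as [|y q], q' as [|y' q']; try discriminate; [simpl in Hlast; congruence|].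
  destruct (Nat.eq_dec y y') as [<-|Hy].
  - exists x, [], x', [], y, q, q'. auto.
  - rewrite !last_cons_default in Hlast.
    destruct (IH (y' :: q')) as (z & a & z' & a' & y0 & r & r' & E & E' & Ha & Hl);
      [assumption|now rewrite !last_cons_default|assumption|].
    exists x, (z :: a), x', (z' :: a'), y0, r, r'.
    rewrite E, E', !last_cons_default. simpl. auto.
Qed.

Lemma list_diverge_rejoin (w w' : list nat) d : length w = length w' ->
  last w d = last w' d -> w <> w' ->
  exists p z a z' a' y r r', w = p ++ z :: a ++ y :: r /\ w' = p ++ z' :: a' ++ y :: r' /\
    z <> z' /\ length a = length a' /\ last a z <> last a' z'.
Proof.
  revert w' d. induction w as [|x w IH]; intros [|x' w'] d Hlen Hlast Hne;
    simpl in Hlen; try discriminate; [congruence|].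
  injection Hlen as Hlen.
  destruct (Nat.eq_dec x x') as [<-|Hx].
  - rewrite !last_cons_default in Hlast.
    destruct (IH w' x) as (p & z & a & z' & a' & y & r & r' & E & E' & Hrest);
      [assumption|assumption|congruence|].
    exists (x :: p), z, a, z', a', y, r, r'. rewrite E, E'. auto.
  - destruct (list_rejoin (x :: w) (x' :: w') d) as (z & a & z' & a' & y & r & r' & E & E' & Hl);
      simpl; auto.
    injection E as <- E. injection E' as <- E'.
    exists [], x, a, x', a', y, r, r'. rewrite E, E'. auto.
Qed.

Lemma path_In P x l y : path P x l -> In y l -> exists a, P a y.
Proof.
  revert x. induction l as [|w l IH]; intros x Hp Hy; [destruct Hy|].
  destruct Hp as [Hw Hp], Hy as [<-|Hy]; eauto.
Qed.

Lemma drev_inj a b : drev a = drev b -> a = b.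
Proof. intro E. now rewrite <- (drevK a), E, drevK. Qed.

Section NonBacktracking.

Variables (B : nat) (ends : nat -> nat * nat).

Definition nb_step (x y : nat) : Prop :=
  (x < 2 * B)%nat /\ (y < 2 * B)%nat /\ dterm ends x = dorig ends y /\ y <> drev x.

Lemma nb_step_flip x y : nb_step x y -> nb_step (drev y) (drev x).
Proof.
  intros (Hx & Hy & Hxy & Hback). unfold nb_step.
  rewrite dterm_drev, dorig_drev. repeat split; try now apply drev_lt.
  - congruence.
  - intro E. apply Hback. now rewrite E, drevK.
Qed.

Lemma cycle_of_closed_path z s : path nb_step z (s ++ [z]) -> is_cycle B ends (z :: s).
Proof.
  intro Hp. split; [discriminate|split].
  - intros x Hx. destruct (path_In _ _ _ x Hp) as (a & _ & Ha & _); [|exact Ha].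
    destruct Hx as [<-|Hx]; apply in_or_app; [right; now left|now left].
  - intros i Hi. change (length (z :: s)) with (S (length s)) in *.
    assert (Hstep := path_nth _ _ _ i Hp ltac:(rewrite length_app; simpl; lia)).
    rewrite app_comm_cons, app_nth1 in Hstep by (simpl; lia).
    destruct Hstep as (_ & _ & Hend & Hback).
    destruct (Nat.eq_dec (S i) (S (length s))) as [E|E].
    + rewrite E, Nat.Div0.mod_same. injection E as ->.
      rewrite nth_middle in Hend, Hback. now split.
    + rewrite Nat.mod_small by lia. simpl nth at 2 4.
      rewrite app_nth1 in Hend, Hback by lia. now split.
Qed.

Lemma cycle_of_branches e z a z' a' y :
  path nb_step e (z :: a) -> path nb_step e (z' :: a') ->
  nb_step (last a z) y -> nb_step (last a' z') y -> z <> z' -> last a z <> last a' z' ->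
  is_cycle B ends (z :: a ++ map drev (rev (z' :: a'))).
Proof.
  intros [(He & Hz & Hez & _) Ha] [(_ & Hz' & Hez' & _) Ha'] (Hl & Hy & Hly & _)
    (Hl' & _ & Hly' & _) Hzz' Hll'.
  destruct (rev (z' :: a')) as [|y' m] eqn:Er; [simpl in Er; now destruct (app_eq_nil _ _ Er)|].
  pose proof (last_rev_cons _ _ _ _ Er) as Em.
  pose proof (rev_cons_head _ _ _ _ Er) as Ey'. subst y'.
  apply cycle_of_closed_path. rewrite <- app_assoc. apply path_app. split; [exact Ha|].
  cbn [map app path]. split.
  - repeat split; try assumption; try now apply drev_lt.
    + rewrite dorig_drev. congruence.
    + intro E. apply Hll', drev_inj. now symmetry.
  - apply path_app. split.
    + exact (path_rev _ _ drev z' a' nb_step_flip Ha' _ m Er).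
    + rewrite last_map_drev, Em. cbn [path]. split; [|exact I].
      repeat split; [now apply drev_lt|assumption| |].
      * rewrite dterm_drev. congruence.
      * rewrite drevK. auto.
Qed.

End NonBacktracking.

Section TwoWalks.

Variables (V B : nat) (ends : nat -> nat * nat) (sigma : nat -> nat -> nat -> Cpx).
Hypothesis SG : simple_graph V B ends.
Hypothesis NB : no_backscatter V B ends sigma.

Definition amp_step (x y : nat) : Prop :=
  (x < 2 * B)%nat /\ (y < 2 * B)%nat /\ Smat ends sigma x y <> C0.

Lemma amp_step_nb_step x y : amp_step x y -> nb_step B ends x y.
Proof.
  intros (Hx & Hy & HS). unfold Smat in HS.
  destruct (Nat.eqb_spec (dterm ends x) (dorig ends y)) as [E|E]; [|congruence].
  repeat split; auto. intros ->. apply HS. rewrite und_drev.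
  apply NB; [now apply (dterm_lt ends V B)|now apply und_lt|apply incb_dterm].
Qed.

Lemma swalk_path b l : (b < 2 * B)%nat -> swalk B ends sigma b l ->
  path amp_step b (rev l) /\ last (rev l) b = wend b l.
Proof.
  intro Hb. induction l as [|c l IH]; intro Hw; [split; [exact I|reflexivity]|].
  destruct Hw as (Hl & Hc & HS). destruct (IH Hl) as [Hp Hlast].
  simpl rev. rewrite last_last. split; [|reflexivity].
  apply path_app. split; [exact Hp|]. rewrite Hlast. repeat split; auto.
  now apply (wend_lt B ends sigma).
Qed.

Lemma nb_step_between_unique e z z' y :
  nb_step B ends e z -> nb_step B ends e z' -> nb_step B ends z y -> nb_step B ends z' y ->
  z = z'.
Proof.
  intros (_ & Hz & Hez & _) (_ & Hz' & Hez' & _) (_ & _ & Hzy & _) (_ & _ & Hzy' & _).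
  apply (dbond_eq_of_ends ends V B); auto; congruence.
Qed.

Lemma walks_not_unique_witness b t : ~ walks_unique B ends sigma b t ->
  exists l l', swalk B ends sigma b l /\ swalk B ends sigma b l' /\
    length l = t /\ length l' = t /\ wend b l = wend b l' /\ l <> l'.
Proof.
  intro H. apply NNPP. intro Hno. apply H. intros l l' Hw Hw' Hlen Hlen' Hend.
  apply NNPP. intro Hne. apply Hno. exists l, l'. auto 7.
Qed.

Lemma two_paths_short_cycle T b w w' :
  path (nb_step B ends) b w -> path (nb_step B ends) b w' -> length w = length w' ->
  last w b = last w' b -> w <> w' -> (length w <= T)%nat ->
  exists p z z', path (nb_step B ends) b p /\ (length p + 3 <= length w)%nat /\ z <> z' /\
    nb_step B ends (last p b) z /\ nb_step B ends (last p b) z' /\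
    on_short_cycle B ends (2 * T) (und z) /\ on_short_cycle B ends (2 * T) (und z').
Proof.
  intros Hp Hp' Hlen Hlast Hne HT.
  destruct (list_diverge_rejoin w w' b Hlen Hlast Hne)
    as (p & z & a & z' & a' & y & r & r' & -> & -> & Hzz' & Ha & Hll').
  apply path_app in Hp as [Hpp [Hz Hp]], Hp' as [_ [Hz' Hp']].
  apply path_app in Hp as [Ha_path [Hy _]], Hp' as [Ha'_path [Hy' _]].
  assert (Hcyc := cycle_of_branches B ends (last p b) z a z' a' y
                    (conj Hz Ha_path) (conj Hz' Ha'_path) Hy Hy' Hzz' Hll').
  assert (Ha1 : a <> []).
  { intros ->. destruct a' as [|]; [|discriminate].
    exact (Hzz' (nb_step_between_unique _ _ _ _ Hz Hz' Hy Hy')). }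
  repeat (rewrite length_app in HT |- *; cbn [length] in HT |- * ).
  set (c := z :: a ++ map drev (rev (z' :: a'))).
  assert (Hc : (length c <= 2 * T)%nat).
  { unfold c. cbn [length]. rewrite length_app, length_map, length_rev. simpl. lia. }
  exists p, z, z'.
  split; [exact Hpp|]. split; [destruct a; [congruence|simpl; lia]|].
  split; [exact Hzz'|]. split; [exact Hz|]. split; [exact Hz'|]. split.
  - exists c. split; [exact Hcyc|]. split; [exact Hc|].
    exists z. split; [now left|reflexivity].
  - exists c. split; [exact Hcyc|]. split; [exact Hc|].
    exists (drev z'). split; [|apply und_drev].
    right. apply in_or_app. right. apply in_map. simpl. apply in_or_app. right. now left.
Qed.

Lemma two_walks_short_cycle T t b : (b < 2 * B)%nat -> (t <= T)%nat ->
  ~ walks_unique B ends sigma b t ->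
  exists p z z', path (nb_step B ends) b p /\ (length p + 3 <= t)%nat /\ z <> z' /\
    nb_step B ends (last p b) z /\ nb_step B ends (last p b) z' /\
    on_short_cycle B ends (2 * T) (und z) /\ on_short_cycle B ends (2 * T) (und z').
Proof.
  intros Hb HT Hmulti.
  destruct (walks_not_unique_witness b t Hmulti)
    as (l & l' & Hw & Hw' & <- & Hlen' & Hend & Hne).
  destruct (swalk_path b l Hb Hw) as [Hp Hlast], (swalk_path b l' Hb Hw') as [Hp' Hlast'].
  rewrite <- length_rev. apply (two_paths_short_cycle T b (rev l) (rev l')).
  - eapply path_impl; [exact amp_step_nb_step|exact Hp].
  - eapply path_impl; [exact amp_step_nb_step|exact Hp'].
  - now rewrite !length_rev.
  - congruence.
  - intro E. apply Hne. now rewrite <- (rev_involutive l), E, rev_involutive.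
  - now rewrite length_rev.
Qed.

End TwoWalks.

(** * Counting non-backtracking paths *)

Lemma Rsum_ge_pair n F i j : (i < n)%nat -> (j < n)%nat -> i <> j ->
  (forall k, (k < n)%nat -> 0 <= F k) -> F i + F j <= Rsum n F.
Proof.
  intros Hi Hj Hij H.
  transitivity (Rsum n (fun k => b2r (Nat.eqb k i) * F k)
                + Rsum n (fun k => b2r (Nat.eqb k j) * F k)).
  - rewrite (Rsum_single n _ i Hi), (Rsum_single n _ j Hj), !Nat.eqb_refl; simpl; [lra| |];
      intros k _ Hk; apply Nat.eqb_neq in Hk as ->; simpl; ring.
  - rewrite <- Rsum_plus. apply Rsum_le. intros k Hk. pose proof (H k Hk).
    destruct (Nat.eqb_spec k i), (Nat.eqb_spec k j); simpl; lra || congruence.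
Qed.

Definition mem (l : list nat) (j : nat) : bool := existsb (Nat.eqb j) l.

Lemma mem_In l j : mem l j = true <-> In j l.
Proof.
  unfold mem. rewrite existsb_exists. split.
  - intros (x & Hx & E). now apply Nat.eqb_eq in E as ->.
  - intro Hj. exists j. now rewrite Nat.eqb_refl.
Qed.

Lemma Rsum_mem n l : NoDup l -> (forall x, In x l -> (x < n)%nat) ->
  Rsum n (fun j => b2r (mem l j)) = INR (length l).
Proof.
  induction l as [|x l IH]; intros Hnd Hlt; [apply Rsum_const0|].
  inversion Hnd as [|? ? Hx Hnd']; subst.
  rewrite (Rsum_ext _ _ (fun j => b2r (Nat.eqb j x) + b2r (mem l j))).
  - rewrite Rsum_plus, Rsum_indicator, IH by (auto; intros; apply Hlt; simpl; auto).
    simpl length. rewrite S_INR. ring.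
  - intros j _. unfold mem. simpl. destruct (Nat.eqb_spec j x) as [->|]; simpl; [|ring].
    destruct (existsb (Nat.eqb x) l) eqn:E; [|simpl; ring].
    exfalso. apply Hx. now apply mem_In.
Qed.

Lemma Rmatpow_col_sum n A q m e : (e < n)%nat ->
  (forall c, (c < n)%nat -> Rsum n (fun j => A j c) = q) ->
  Rsum n (fun b => Rmatpow n A m b e) = q ^ m.
Proof.
  intros He HA. revert e He. induction m as [|m IH]; intros e He; simpl.
  - now apply Rsum_indicator.
  - rewrite Rsum_swap, (Rsum_ext n _ (fun j => q ^ m * A j e)).
    + rewrite Rsum_mult_l, HA by assumption. ring.
    + intros j Hj. now rewrite Rsum_mult_r, IH.
Qed.

Lemma Rmatpow_path_ge1 n A (P : nat -> nat -> Prop) b p : (b < n)%nat ->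
  (forall i j, 0 <= A i j) -> (forall x y, P x y -> (y < n)%nat /\ 1 <= A x y) ->
  path P b p -> 1 <= Rmatpow n A (length p) b (last p b).
Proof.
  intros Hb HA HP. induction p as [|x p IH] using rev_ind; intro Hp.
  - simpl. rewrite Nat.eqb_refl. simpl. lra.
  - apply path_app in Hp as [Hp [Hx _]]. destruct (HP _ _ Hx) as [Hxn HAx].
    assert (Hlast : (last p b < n)%nat).
    { destruct p as [|y p0 _] using rev_ind; [exact Hb|].
      rewrite last_last. apply path_app in Hp as [_ [Hy _]]. apply (HP _ _ Hy). }
    rewrite length_app, Nat.add_1_r, last_last. simpl.
    eapply Rle_trans; [|apply (Rsum_ge_term _ _ (last p b) Hlast)].
    + specialize (IH Hp). nra.
    + intros. apply Rmult_le_pos; [apply Rmatpow_ge0|]; auto.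
Qed.

Section NonBacktrackingCount.

Variables (V B : nat) (ends : nat -> nat * nat) (d : nat).
Hypothesis SG : simple_graph V B ends.
Hypothesis REG : regular V B ends d.

Definition nb_adj (e c : nat) : R :=
  b2r (Nat.eqb (dterm ends e) (dorig ends c) && negb (Nat.eqb c (drev e))).

Lemma nb_adj_ge0 e c : 0 <= nb_adj e c.
Proof. apply b2r_ge0. Qed.

Lemma nb_adj_nb_step x y : nb_step B ends x y -> nb_adj x y = 1.
Proof.
  intros (_ & _ & Hxy & Hback). unfold nb_adj. rewrite Hxy, Nat.eqb_refl.
  apply Nat.eqb_neq in Hback as ->. reflexivity.
Qed.

Lemma nb_adj_col_sum c : (c < 2 * B)%nat -> Rsum (2 * B) (fun e => nb_adj e c) = INR d - 1.
Proof.
  intro Hc.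
  rewrite (Rsum_ext _ _ (fun e => b2r (Nat.eqb (dterm ends e) (dorig ends c))
                                 - b2r (Nat.eqb e (drev c)))).
  - rewrite Rsum_minus, (in_degree ends V B SG d), Rsum_indicator; auto using drev_lt.
    now apply (dorig_lt ends V B).
  - intros e _. unfold nb_adj. destruct (Nat.eqb_spec e (drev c)) as [->|Hne].
    + rewrite dterm_drev, drevK, !Nat.eqb_refl. simpl. ring.
    + replace (Nat.eqb c (drev e)) with false
        by (symmetry; apply Nat.eqb_neq; intros ->; apply Hne; now rewrite drevK).
      destruct (Nat.eqb (dterm ends e) (dorig ends c)); simpl; ring.
Qed.

Definition cycle_successors (lC : list nat) (e : nat) : R :=
  Rsum (2 * B) (fun c => nb_adj e c * b2r (mem lC (und c))).

Lemma cycle_successors_ge0 lC e : 0 <= cycle_successors lC e.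
Proof.
  apply Rsum_ge0. intros. apply Rmult_le_pos; [apply nb_adj_ge0|apply b2r_ge0].
Qed.

Lemma cycle_successors_total lC : NoDup lC -> (forall j, In j lC -> (j < B)%nat) ->
  Rsum (2 * B) (cycle_successors lC) = (INR d - 1) * (2 * INR (length lC)).
Proof.
  intros Hnd Hlt. unfold cycle_successors. rewrite Rsum_swap.
  rewrite (Rsum_ext _ _ (fun c => (INR d - 1) * b2r (mem lC (und c))))
    by (intros; now rewrite Rsum_mult_r, nb_adj_col_sum).
  rewrite Rsum_mult_l, Rsum_double,
    (Rsum_ext _ _ (fun j => 2 * b2r (mem lC j))) by (intros; rewrite und_even, und_odd; ring).
  now rewrite Rsum_mult_l, Rsum_mem.
Qed.

Lemma cycle_successors_ge2 lC e z z' : nb_step B ends e z -> nb_step B ends e z' -> z <> z' ->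
  In (und z) lC -> In (und z') lC -> 2 <= cycle_successors lC e.
Proof.
  intros Hz Hz' Hne Iz Iz'. unfold cycle_successors.
  eapply Rle_trans;
    [|apply (Rsum_ge_pair _ _ z z'); [apply Hz|apply Hz'|exact Hne|]].
  - cbv beta. rewrite !nb_adj_nb_step by assumption.
    apply mem_In in Iz as ->. apply mem_In in Iz' as ->. simpl. lra.
  - intros. apply Rmult_le_pos; [apply nb_adj_ge0|apply b2r_ge0].
Qed.

(* [t - 2] truncates: for [t <= 2] two walks with common ends coincide. *)
Definition deviation_weight (lC : list nat) (t b : nat) : R :=
  Rsum (t - 2) (fun m => Rsum (2 * B) (fun e =>
    Rmatpow (2 * B) nb_adj m b e * cycle_successors lC e)).

Lemma deviation_weight_ge0 lC t b : 0 <= deviation_weight lC t b.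
Proof.
  apply Rsum_ge0. intros. apply Rsum_ge0. intros. apply Rmult_le_pos.
  - apply Rmatpow_ge0, nb_adj_ge0.
  - apply cycle_successors_ge0.
Qed.

Lemma deviation_weight_total lC t : NoDup lC -> (forall j, In j lC -> (j < B)%nat) ->
  Rsum (2 * B) (deviation_weight lC t) =
  Rsum (t - 2) (fun m => (INR d - 1) ^ m) * ((INR d - 1) * (2 * INR (length lC))).
Proof.
  intros Hnd Hlt. unfold deviation_weight. rewrite Rsum_swap, <- Rsum_mult_r.
  apply Rsum_ext. intros m _. rewrite Rsum_swap, <- cycle_successors_total by assumption.
  rewrite <- Rsum_mult_l. apply Rsum_ext. intros e He.
  now rewrite Rsum_mult_r, (Rmatpow_col_sum _ _ (INR d - 1)) by (auto using nb_adj_col_sum).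
Qed.

Lemma deviation_weight_ge2 lC t b p z z' : (b < 2 * B)%nat ->
  path (nb_step B ends) b p -> (length p + 3 <= t)%nat -> z <> z' ->
  nb_step B ends (last p b) z -> nb_step B ends (last p b) z' ->
  In (und z) lC -> In (und z') lC -> 2 <= deviation_weight lC t b.
Proof.
  intros Hb Hp Hlen Hzz' Hz Hz' Iz Iz'.
  assert (Hpaths : 1 <= Rmatpow (2 * B) nb_adj (length p) b (last p b)).
  { apply (Rmatpow_path_ge1 _ _ (nb_step B ends)); auto using nb_adj_ge0.
    intros x y Hxy. split; [apply Hxy|]. rewrite nb_adj_nb_step; [lra|exact Hxy]. }
  assert (Hsucc := cycle_successors_ge2 lC _ _ _ Hz Hz' Hzz' Iz Iz').
  unfold deviation_weight.
  eapply Rle_trans; [|apply (Rsum_ge_term _ _ (length p)); [lia|]].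
  - eapply Rle_trans; [|apply (Rsum_ge_term _ _ (last p b)); [apply Hz|]].
    + nra.
    + intros. apply Rmult_le_pos; [apply Rmatpow_ge0, nb_adj_ge0|apply cycle_successors_ge0].
  - intros. apply Rsum_ge0. intros.
    apply Rmult_le_pos; [apply Rmatpow_ge0, nb_adj_ge0|apply cycle_successors_ge0].
Qed.

End NonBacktrackingCount.

(** * The estimate *)

Section Deviation.

Variables (V B : nat) (ends : nat -> nat * nat) (sigma : nat -> nat -> nat -> Cpx)
  (L : nat -> R) (t : nat) (Mt : nat -> nat -> R).
Hypothesis SG : simple_graph V B ends.
Hypothesis VU : vertex_unitary V B ends sigma.
Hypothesis HMt : is_Mtilde B L ends sigma t Mt.

Let Mpow := Rmatpow (2 * B) (fun i j => Cabs2 (Smat ends sigma i j)) t.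

Lemma Mtilde_ge0 b c : (b < 2 * B)%nat -> (c < 2 * B)%nat -> 0 <= Mt b c.
Proof. intros Hb Hc. apply (time_average_ge0 _ _ (HMt b c Hb Hc)). intros. apply Cabs2_ge0. Qed.

Lemma Mtilde_row_sum b : (b < 2 * B)%nat -> Rsum (2 * B) (fun c => Mt b c) = 1.
Proof.
  intro Hb.
  apply (time_average_const
    (fun k => Rsum (2 * B) (fun c => Cabs2 (Cmatpow (2 * B) (Umat L ends sigma k) t b c)))).
  - apply time_average_Rsum. intros c Hc. now apply HMt.
  - intro k. apply Cmatpow_row_norm; [apply (Umat_orthonormal_rows V B ends sigma SG VU)|assumption].
Qed.

Lemma Mtilde_unique_walks b c : (b < 2 * B)%nat -> (c < 2 * B)%nat ->
  walks_unique B ends sigma b t -> Mt b c = Mpow b c.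
Proof.
  intros Hb Hc Hu. apply (time_average_const _ _ _ (HMt b c Hb Hc)). intro k.
  now apply Upow_abs2_unique_walks.
Qed.

Lemma Mpow_row_sum b : (b < 2 * B)%nat -> Rsum (2 * B) (fun c => Mpow b c) = 1.
Proof.
  intro Hb. apply Rmatpow_row_sum; [assumption|].
  intros j Hj. now apply (Smat_row_abs2_sum V B ends sigma SG VU).
Qed.

Lemma row_deviation_le2 b : (b < 2 * B)%nat ->
  Rsum (2 * B) (fun c => Rabs (Mt b c - Mpow b c)) <= 2.
Proof.
  intro Hb. apply Rle_trans with (Rsum (2 * B) (fun c => Mt b c + Mpow b c)).
  - apply Rsum_le. intros c Hc.
    assert (0 <= Mt b c) by now apply Mtilde_ge0.
    assert (0 <= Mpow b c) by (apply Rmatpow_ge0; intros; apply Cabs2_ge0).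
    unfold Rabs. destruct Rcase_abs; lra.
  - rewrite Rsum_plus, Mtilde_row_sum, Mpow_row_sum by assumption. lra.
Qed.

Lemma row_deviation_bound d T lC b : no_backscatter V B ends sigma -> regular V B ends d ->
  (forall j, In j lC <-> (j < B)%nat /\ on_short_cycle B ends (2 * T) j) ->
  (t <= T)%nat -> (b < 2 * B)%nat ->
  Rsum (2 * B) (fun c => Rabs (Mt b c - Mpow b c)) <= deviation_weight B ends lC t b.
Proof.
  intros NB REG HlC HT Hb.
  destruct (classic (walks_unique B ends sigma b t)) as [Hu|Hmulti].
  - rewrite (Rsum_ext _ _ (fun _ => 0)), Rsum_const0 by
      (intros c Hc; rewrite Mtilde_unique_walks by assumption;
       rewrite Rminus_diag, Rabs_R0; reflexivity).
    apply deviation_weight_ge0.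
  - destruct (two_walks_short_cycle V B ends sigma SG NB T t b)
      as (p & z & z' & Hp & Hplen & Hzz' & Hz & Hz' & Cz & Cz'); auto.
    apply Rle_trans with 2; [now apply row_deviation_le2|].
    apply deviation_weight_ge2 with (p := p) (z := z) (z' := z'); auto;
      apply HlC; split; auto; apply und_lt; [apply Hz|apply Hz'].
Qed.

End Deviation.

Lemma Cmatvec_diff_bound n (A A' : nat -> nat -> Cpx) f kappa b :
  (forall c, (c < n)%nat -> Cabs (f c) <= kappa) ->
  Cabs (Csub (Cmatvec n A f b) (Cmatvec n A' f b))
    <= kappa * Rsum n (fun c => Cabs (Csub (A b c) (A' b c))).
Proof.
  intro Hf. unfold Cmatvec. rewrite Csub_Csum, <- Rsum_mult_l.
  eapply Rle_trans; [apply Cabs_Csum|]. apply Rsum_le. intros c Hc.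
  replace (Csub (Cmul (A b c) (f c)) (Cmul (A' b c) (f c)))
    with (Cmul (Csub (A b c) (A' b c)) (f c)) by Cpx_ring.
  rewrite Cabs_mul. pose proof (Cabs_ge0 (Csub (A b c) (A' b c))).
  pose proof (Hf c Hc). pose proof (Cabs_ge0 (f c)). nra.
Qed.

Lemma Cinner_Cmatvec_diff_bound n (A A' : nat -> nat -> Cpx) f kappa :
  (forall c, (c < n)%nat -> Cabs (f c) <= kappa) ->
  Cabs (Csub (Cinner n f (Cmatvec n A f)) (Cinner n f (Cmatvec n A' f)))
    <= kappa ^ 2 * Rsum n (fun b => Rsum n (fun c => Cabs (Csub (A b c) (A' b c)))).
Proof.
  intro Hf. unfold Cinner. rewrite Csub_Csum, <- Rsum_mult_l.
  eapply Rle_trans; [apply Cabs_Csum|]. apply Rsum_le. intros b Hb.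
  replace (Csub (Cmul (Cconj (f b)) (Cmatvec n A f b)) (Cmul (Cconj (f b)) (Cmatvec n A' f b)))
    with (Cmul (Cconj (f b)) (Csub (Cmatvec n A f b) (Cmatvec n A' f b))) by Cpx_ring.
  rewrite Cabs_mul, Cabs_conj.
  pose proof (Cmatvec_diff_bound n A A' f kappa b Hf).
  pose proof (Hf b Hb). pose proof (Cabs_ge0 (f b)).
  pose proof (Cabs_ge0 (Csub (Cmatvec n A f b) (Cmatvec n A' f b))). nra.
Qed.

Lemma geometric_sum q k : Rsum k (fun m => q ^ m) * (q - 1) = q ^ k - 1.
Proof. induction k as [|k IH]; simpl; [ring|]. rewrite Rmult_plus_distr_r, IH. ring. Qed.

Lemma geometric_weight_bound (kappa r nC : R) t : 3 <= r -> 0 <= nC -> (1 <= t)%nat ->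
  kappa ^ 2 * (Rsum (t - 2) (fun m => (r - 1) ^ m) * ((r - 1) * (2 * nC)))
    <= 2 * kappa ^ 2 / ((r - 2) * (r - 1)) * (r - 1) ^ t * nC.
Proof.
  intros Hr HnC Ht.
  assert (Hrhs : 0 <= 2 * kappa ^ 2 / ((r - 2) * (r - 1)) * (r - 1) ^ t * nC).
  { apply Rmult_le_pos; [|assumption]. apply Rmult_le_pos; [|apply pow_le; lra].
    apply Rmult_le_pos; [pose proof (pow2_ge_0 kappa); lra|].
    left. apply Rinv_0_lt_compat. nra. }
  destruct (Nat.le_gt_cases t 1) as [Ht1|Ht2].
  - replace (t - 2)%nat with 0%nat by lia. simpl. lra.
  - set (S := Rsum (t - 2) (fun m => (r - 1) ^ m)).
    assert (HS : (r - 1) ^ (t - 2) = S * (r - 2) + 1)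
      by (pose proof (geometric_sum (r - 1) (t - 2)) as G; fold S in G; nra).
    assert (Et : (r - 1) ^ t = (r - 1) ^ (t - 2) * (r - 1) ^ 2)
      by (rewrite <- pow_add; f_equal; lia).
    rewrite Et, HS.
    assert (0 <= 2 * kappa ^ 2 * nC * (r - 1) / (r - 2)).
    { apply Rmult_le_pos; [|left; apply Rinv_0_lt_compat; lra].
      pose proof (pow2_ge_0 kappa).
      assert (0 <= kappa ^ 2 * nC) by (apply Rmult_le_pos; lra). nra. }
    replace (2 * kappa ^ 2 / ((r - 2) * (r - 1)) * ((S * (r - 2) + 1) * (r - 1) ^ 2) * nC)
      with (kappa ^ 2 * (S * ((r - 1) * (2 * nC))) + 2 * kappa ^ 2 * nC * (r - 1) / (r - 2))
      by (field; lra).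
    lra.
Qed.

Theorem proposition3 (V B d : nat) (ends : nat -> nat * nat) (L : nat -> R)
  (sigma : nat -> nat -> nat -> Cpx) (T : nat) (kappa : R) (f : nat -> Cpx)
  (nC : nat) :
  simple_graph V B ends -> regular V B ends d -> (3 <= d)%nat ->
  (forall j, (j < B)%nat -> 0 < L j) ->
  vertex_unitary V B ends sigma -> no_backscatter V B ends sigma ->
  (1 <= T)%nat -> 0 < kappa ->
  (forall b, (b < 2 * B)%nat -> Cabs (f b) <= kappa) ->
  card_bonds B (on_short_cycle B ends (2 * T)) nC ->
  forall (t : nat) (Mt : nat -> nat -> R),
    (1 <= t <= T)%nat ->
    is_Mtilde B L ends sigma t Mt ->
    Cabs (Csub (Cinner (2 * B) f (Cmatvec (2 * B) (fun b c => RtoC (Mt b c)) f))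
               (Cinner (2 * B) f (Cmatvec (2 * B) (Cmatpow (2 * B) (Mmat ends sigma) t) f)))
    <= 2 * kappa ^ 2 / ((INR d - 2) * (INR d - 1)) * (INR d - 1) ^ t * INR nC.
Proof.
  intros SG REG Hd _ VU NB _ _ Hf (lC & Hnd & HlC & <-) t Mt Ht HMt.
  set (Mpow := Rmatpow (2 * B) (fun i j => Cabs2 (Smat ends sigma i j)) t).
  assert (Hentry : forall b c,
    Cabs (Csub (RtoC (Mt b c)) (Cmatpow (2 * B) (Mmat ends sigma) t b c))
      = Rabs (Mt b c - Mpow b c)).
  { intros b c. unfold Mmat, Mpow. rewrite Cmatpow_RtoC, <- Cabs_RtoC. f_equal. Cpx_ring. }
  eapply Rle_trans; [apply Cinner_Cmatvec_diff_bound, Hf|].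
  eapply Rle_trans; [apply Rmult_le_compat_l; [apply pow2_ge_0|]|].
  { apply Rsum_le. intros b Hb.
    rewrite (Rsum_ext _ _ (fun c => Rabs (Mt b c - Mpow b c))) by (intros; apply Hentry).
    apply (row_deviation_bound V B ends sigma L t Mt SG VU HMt d T); auto; lia. }
  rewrite (deviation_weight_total V B ends d SG REG) by (auto; intros j Hj; now apply HlC).
  apply geometric_weight_bound; [|apply pos_INR|lia].
  apply le_INR in Hd. simpl in Hd. lra.
Qed.
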